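(* Let $2\leq m\leq n\leq p$ be integers. The $m\times n\times p$ chessboard has a bi-sited closed knight tour if and only if all of the following hold: (a) at least one of $m,n,p$ is even; (b) $n\geq 3$; (c) $p\geq 4$.
   Context: The $m\times n\times p$ board is $\mathcal{B}=\{1,\dots,m\}\times\{1,\dots,n\}\times\{1,\dots,p\}$. Knight moves $\mathcal{C}_3$ are vectors in $\mathbb{Z}^3$ with exactly one coordinate in $\{\pm1\}$, exactly one in $\{\pm2\}$ and the remaining one $0$; cells are adjacent iff their difference is in $\mathcal{C}_3$; a closed knight tour is a Hamiltonian cycle. Let $e_1,e_2,e_3$ be the standard basis. For $c\in\mathcal{C}_3$ let $e_{[c,1]}$ (resp. $e_{[c,2]}$) be the basis vector of the coordinate where $c$ has entry $\pm1$ (resp. $\pm2$), and $\tilde c=-\langle c,e_{[c,1]}\rangle e_{[c,1]}+\langle c,e_{[c,2]}\rangle e_{[c,2]}$. For a Hamiltonian cycle $(a^i)_{i\in I}$, $I=\{1,\dots,N\}$, indices mod $N$, a \emph{site} given by edges $\{a^n,a^{n+1}\}$, $\{a^m,a^{m+1}\}$ is one of the following, for some $c\in\mathcal{C}_3$ and some $i$: (wopp) $a^{n+1}=a^n+c$, $a^m=a^{m+1}+c$, $a^m-a^{n+1}=a^{m+1}-a^n\in\{\pm2e_i\}$; (nwopp) $a^{n+1}=a^n+c$, $a^{m+1}=a^m+c$, $a^m-a^n=a^{m+1}-a^{n+1}\in\{\pm2e_i\}$; (wocp) $a^{n+1}=a^n+c$, $a^{m+1}=a^m+\tilde c$, $a^m-a^n=\langle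 c,e_{[c,1]}\rangle e_{[c,1]}$; (nwocp) $a^{n+1}=a^n+c$, $a^m=a^{m+1}+\tilde c$, $a^{m+1}-a^n=\langle c,e_{[c,1]}\rangle e_{[c,1]}$. Its support is $\{a^n,a^{n+1},a^m,a^{m+1}\}$. A closed tour is \emph{bi-sited} if it contains two sites with disjoint supports. *)

From mathcomp Require Import all_boot all_order all_algebra.
Set Implicit Arguments. Unset Strict Implicit. Unset Printing Implicit Defensive.
Import Order.TTheory GRing.Theory Num.Theory.
Local Open Scope ring_scope.

Definition vec := (int * int * int)%type.
Definition vx (v : vec) : int := v.1.1.
Definition vy (v : vec) : int := v.1.2.
Definition vz (v : vec) : int := v.2.
Definition vadd (u v : vec) : vec := (vx u + vx v, vy u + vy v, vz u + vz v).
Definition vsub (u v : vec) : vec := (vx u - vx v, vy u - vy v, vz u - vz v).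
Definition vzero : vec := (0, 0, 0).

(* standard basis e_1, e_2, e_3 (indexed 0,1,2) *)
Definition ebasis (i : 'I_3) : vec :=
  match val i with 0%N => (1, 0, 0) | 1%N => (0, 1, 0) | _ => (0, 0, 1) end.
Definition vscale (k : int) (v : vec) : vec := (k * vx v, k * vy v, k * vz v).

Definition on_board (m n p : nat) (x : vec) : Prop :=
  [/\ 1 <= vx x <= m%:Z, 1 <= vy x <= n%:Z & 1 <= vz x <= p%:Z].

Definition knight_move (c : vec) : Prop :=
  perm_eq [:: absz (vx c); absz (vy c); absz (vz c)] [:: 0%N; 1%N; 2%N].

(* <c, e_[c,1]> e_[c,1] : keep the coordinate of c that is +-1 *)
Definition part1 (c : vec) : vec :=
  (if absz (vx c) == 1%N then vx c else 0,
   if absz (vy c) == 1%N then vy c else 0,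
   if absz (vz c) == 1%N then vz c else 0).

(* c~ = - <c,e_[c,1]> e_[c,1] + <c,e_[c,2]> e_[c,2] (for a knight move c) *)
Definition ctilde (c : vec) : vec :=
  (if absz (vx c) == 1%N then - vx c else vx c,
   if absz (vy c) == 1%N then - vy c else vy c,
   if absz (vz c) == 1%N then - vz c else vz c).

Definition pm2e (v : vec) : Prop :=
  exists i : 'I_3, v = vscale 2 (ebasis i) \/ v = vscale (-2) (ebasis i).

(* cyclic indexing of a tour: a^i, indices mod N = size s (0-based) *)
Definition at_ (s : seq vec) (i : nat) : vec := nth vzero s (i %% size s).

Definition closed_tour (m n p : nat) (s : seq vec) : Prop :=
  [/\ uniq s,
      (forall x, x \in s <-> on_board m n p x) &
      (forall i, (i < size s)%N -> knight_move (vsub (at_ s i.+1) (at_ s i)))].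

Definition site (s : seq vec) (k l : nat) : Prop :=
  let a := at_ s in
  (k < size s)%N /\ (l < size s)%N /\
  exists c : vec, knight_move c /\
   [\/
       [/\ a k.+1 = vadd (a k) c, a l = vadd (a l.+1) c,
           vsub (a l) (a k.+1) = vsub (a l.+1) (a k) & pm2e (vsub (a l) (a k.+1))],
       [/\ a k.+1 = vadd (a k) c, a l.+1 = vadd (a l) c,
           vsub (a l) (a k) = vsub (a l.+1) (a k.+1) & pm2e (vsub (a l) (a k))],
       [/\ a k.+1 = vadd (a k) c, a l.+1 = vadd (a l) (ctilde c)
         & vsub (a l) (a k) = part1 c]
     |
       [/\ a k.+1 = vadd (a k) c, a l = vadd (a l.+1) (ctilde c)
         & vsub (a l.+1) (a k) = part1 c]].

Definition site_support (s : seq vec) (k l : nat) : seq vec :=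
  [:: at_ s k; at_ s k.+1; at_ s l; at_ s l.+1].

Definition bisited (s : seq vec) : Prop :=
  exists k1 l1 k2 l2, site s k1 l1 /\ site s k2 l2 /\
    (forall x, x \in site_support s k1 l1 -> x \notin site_support s k2 l2).

From mathcomp Require Import all_boot all_order all_algebra zify.
Set Implicit Arguments. Unset Strict Implicit. Unset Printing Implicit Defensive.
Import Order.TTheory GRing.Theory Num.Theory.
Local Open Scope ring_scope.

(* Necessity.  A knight move changes the coordinate sum by an odd amount, so a
   closed tour has even length m n p.  On a 2 x 2 x p board every move changes
   the last coordinate by 2, so its parity is invariant along a tour.  The
   centre of a 2 x 3 x 3 or 3 x 3 x 3 board has no knight neighbour.

   Sufficiency.  Closed tours of the boards with m in {2, 3}, 3 <= n <= 6 and
   4 <= p <= 7 (not all odd) are checked by computation.  Each carries, for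
   every axis, a "high" edge next to its far face and a "low" edge next to its
   near face, placed so that when two boards are stacked along that axis, the
   high edge of the first and the low edge of the second can be exchanged for
   two knight moves across the interface; this merges the two tours into one.
   The merged tour keeps all other gluing edges and the bi-site of the first
   tour, whose edges avoid the high edges.  Stacking base boards in steps of 4
   along z and y and of 2 along x reaches every admissible board. *)

(** * Splicing two cycles *)

Section Splice.
Variable T : eqType.
Implicit Types (s t : seq T) (x y : T).

Lemma next_last x t : uniq (x :: t) -> next (x :: t) (last x t) = x.
Proof.
move=> U; have lastE : last x t = nth x (x :: t) (size t) by rewrite (last_nth x).
by rewrite next_nth mem_last lastE index_uniq //= nth_default.
Qed.

Lemma next_catl x t y r z : uniq ((x :: t) ++ (y :: r)) -> z \in x :: t ->
  next ((x :: t) ++ (y :: r)) z = if z == last x t then y else next (x :: t) z.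
Proof.
move=> U zin; have Ut : uniq (x :: t) by move: U; rewrite cat_uniq => /and3P[].
rewrite !next_nth mem_cat zin index_cat zin /=.
have lastE : last x t = nth x (x :: t) (size t) by rewrite (last_nth x).
have -> : (z == last x t) = (index z (x :: t) == size t).
  apply/eqP/eqP => [->|h]; first by rewrite lastE index_uniq.
  by rewrite -(nth_index x zin) h lastE.
have : (index z (x :: t) < size (x :: t))%N by rewrite index_mem.
rewrite /= ltnS leq_eqVlt => /orP[/eqP->|lt]; first by rewrite eqxx nth_cat ltnn subnn.
by rewrite (ltn_eqF lt) nth_cat lt.
Qed.

Lemma next_catr x t y r z : uniq ((x :: t) ++ (y :: r)) -> z \in y :: r ->
  next ((x :: t) ++ (y :: r)) z = if z == last y r then x else next (y :: r) z.
Proof.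
move=> U zin; rewrite -(next_rot (size (x :: t)) U) rot_size_cat.
by apply: next_catl => //; rewrite uniq_catC.
Qed.

Lemma rot_to_next_last s x i t : uniq s -> x \in s -> rot i s = next s x :: t ->
  last (next s x) t = x.
Proof.
move=> U xin E; have U' : uniq (next s x :: t) by rewrite -E rot_uniq.
apply: (can_inj (prev_next U')); rewrite next_last //.
by rewrite -E next_rot.
Qed.

Lemma cycle_splice s1 s2 a b' : uniq (s1 ++ s2) -> a \in s1 -> b' \in s2 ->
  exists2 s, uniq s /\ s =i s1 ++ s2 &
    forall z, next s z = if z == a then next s2 b' else if z == b' then next s1 a
                         else if z \in s1 then next s1 z else next s2 z.
Proof.
move=> U ain b'in; have /and3P[U1 D U2] : [&& uniq s1, ~~ has (mem s1) s2 & uniq s2].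
  by rewrite -cat_uniq.
have disj z : z \in s1 -> z \in s2 -> False.
  by move=> z1 z2; move/hasPn: D => /(_ z z2) /negP; apply.
have [i t1 E1] : rot_to_spec s1 (next s1 a) by apply: rot_to; rewrite mem_next.
have [j t2 E2] : rot_to_spec s2 (next s2 b') by apply: rot_to; rewrite mem_next.
have L1 := rot_to_next_last U1 ain E1; have L2 := rot_to_next_last U2 b'in E2.
have P : perm_eq ((next s1 a :: t1) ++ (next s2 b' :: t2)) (s1 ++ s2).
  by rewrite -E1 -E2 perm_cat ?perm_rot.
exists ((next s1 a :: t1) ++ (next s2 b' :: t2)).
  by split; [rewrite (perm_uniq P) | apply: perm_mem].
have Us := U; rewrite -(perm_uniq P) in Us.
move=> z; have [z1|z1] := boolP (z \in s1).
  have zin : z \in next s1 a :: t1 by rewrite -E1 mem_rot.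
  rewrite next_catl // L1 -E1 (next_rot _ U1).
  case: eqP => // _; rewrite ifF ?z1 //.
  by apply/eqP => zb; apply: (disj z) => //; rewrite zb.
have [z2|z2] := boolP (z \in s2).
  have zin : z \in next s2 b' :: t2 by rewrite -E2 mem_rot.
  have -> : (z == a) = false by apply/eqP => za; move: z1; rewrite za ain.
  by rewrite next_catr // L2 -E2 (next_rot _ U2); case: eqP.
have zs : z \notin (next s1 a :: t1) ++ (next s2 b' :: t2).
  by rewrite (perm_mem P) mem_cat negb_or z1 z2.
have next_out p x : x \notin p -> next p x = x by rewrite next_nth => /negbTE->.
rewrite (next_out _ _ zs) (next_out _ _ z2).
have -> : (z == a) = false by apply/eqP => za; move: z1; rewrite za ain.
by have -> : (z == b') = false by apply/eqP => zb; move: z2; rewrite zb b'in.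
Qed.

End Splice.

Definition shift_edge (t : vec) (e : vec * vec) : vec * vec := (vadd t e.1, vadd t e.2).

Ltac vec_lia :=
  repeat match goal with x := _ |- _ => subst x end;
  rewrite ?/shift_edge ?/vadd ?/vsub ?/vx ?/vy ?/vz /= ?xpair_eqE /=; lia.

Lemma vsub_vaddr (t x : vec) : vsub (vadd t x) t = x.
Proof. by case: t x => [[? ?] ?] [[? ?] ?]; apply/eqP; vec_lia. Qed.

Lemma vadd_vsub (t x : vec) : vadd t (vsub x t) = x.
Proof. by case: t x => [[? ?] ?] [[? ?] ?]; apply/eqP; vec_lia. Qed.

Lemma vadd_inj (t : vec) : injective (vadd t).
Proof. by move=> x y h; rewrite -(vsub_vaddr t x) h vsub_vaddr. Qed.

Lemma vsub_vadd2l (t x y : vec) : vsub (vadd t x) (vadd t y) = vsub x y.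
Proof. by case: t x y => [[? ?] ?] [[? ?] ?] [[? ?] ?]; apply/eqP; vec_lia. Qed.

(* Boolean form of [knight_move], to which it is convertible. *)
Definition knight_moveb (c : vec) : bool :=
  perm_eq [:: absz (vx c); absz (vy c); absz (vz c)] [:: 0%N; 1%N; 2%N].

Definition knight_cycle (B : vec -> Prop) (s : seq vec) : Prop :=
  [/\ uniq s, forall x, x \in s <-> B x &
      forall x, x \in s -> knight_move (vsub (next s x) x)].

Definition cycle_edge (s : seq vec) (e : vec * vec) : bool :=
  (e.1 \in s) && (next s e.1 == e.2).

Lemma knight_cycle_ext (B B' : vec -> Prop) s :
  (forall x, B x <-> B' x) -> knight_cycle B s -> knight_cycle B' s.
Proof. by move=> BB' [U M K]; split=> // x; rewrite M. Qed.

Lemma knight_cycle_merge B1 B2 s1 s2 a b a' b' :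
  knight_cycle B1 s1 -> knight_cycle B2 s2 -> (forall x, B1 x -> B2 x -> False) ->
  cycle_edge s1 (a, b) -> cycle_edge s2 (b', a') ->
  knight_move (vsub a' a) -> knight_move (vsub b b') ->
  exists2 s, knight_cycle (fun x => B1 x \/ B2 x) s &
    forall e, cycle_edge s1 e && (e.1 != a) || cycle_edge s2 e && (e.1 != b') ->
      cycle_edge s e.
Proof.
move=> [U1 M1 K1] [U2 M2 K2] D /andP[/= ain /eqP ab] /andP[/= b'in /eqP b'a'] ka kb.
have disj x : x \in s1 -> x \in s2 -> False by move=> /M1 ? /M2; apply: D.
have U : uniq (s1 ++ s2).
  by rewrite cat_uniq U1 U2 andbT; apply/hasPn => x x2; apply/negP => x1; apply: (disj x).
have [s [Us Ms] Ns] := cycle_splice U ain b'in; rewrite ab b'a' in Ns.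
have ne_b' x : x \in s1 -> (x == b') = false.
  by move=> x1; apply/eqP => xb; apply: (disj x) => //; rewrite xb.
have ne_a x : x \in s2 -> (x == a) = false.
  by move=> x2; apply/eqP => xa; apply: (disj x) => //; rewrite xa.
exists s.
  split=> // x; rewrite Ms mem_cat.
    by split=> [/orP[/M1|/M2]|[/M1->|/M2->]]; rewrite ?orbT; [left|right|..].
  rewrite Ns => /orP[] xin.
    by rewrite ne_b' // xin; case: eqP => [->|_] //; apply: K1.
  have -> : (x \in s1) = false by apply/negP => x1; apply: disj _ x1 xin.
  rewrite ne_a //.
  by case: eqP => [->|_] //; apply: K2.
move=> [u v] /orP[] /andP[/andP[/= uin /eqP uv] /negbTE ua];
  rewrite /cycle_edge /= Ms mem_cat uin ?orbT Ns ua /=.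
  by rewrite ne_b' // uin uv.
have -> : (u \in s1) = false by apply/negP => u1; apply: disj _ u1 uin.
by rewrite ne_a // uv.
Qed.

Lemma knight_cycle_shift B s t :
  knight_cycle B s -> knight_cycle (fun x => B (vsub x t)) (map (vadd t) s).
Proof.
move=> [U M K]; split.
- by rewrite map_inj_uniq //; apply: vadd_inj.
- by move=> x; rewrite -{1}(vadd_vsub t x) (mem_map (@vadd_inj t)).
- move=> x /mapP[y yin ->]; rewrite (next_map (@vadd_inj t) U) vsub_vadd2l.
  exact: K.
Qed.

Lemma cycle_edge_shift s t e :
  uniq s -> cycle_edge s e -> cycle_edge (map (vadd t) s) (shift_edge t e).
Proof.
case: e => u v U /andP[/= uin /eqP <-].
by rewrite /cycle_edge /= (mem_map (@vadd_inj t)) uin (next_map (@vadd_inj t) U) eqxx.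
Qed.

(** * Sites *)

Definition pm2eb (v : vec) : bool :=
  v \in [:: (2, 0, 0); (-2, 0, 0); (0, 2, 0); (0, -2, 0); (0, 0, 2); (0, 0, -2)].

Lemma pm2ebP v : pm2eb v -> pm2e v.
Proof.
rewrite /pm2eb !inE => /or4P[|||/or3P[]] /eqP->.
- by exists ord0; left.
- by exists ord0; right.
- by exists (@Ordinal 3 1 isT); left.
- by exists (@Ordinal 3 1 isT); right.
- by exists (@Ordinal 3 2 isT); left.
- by exists (@Ordinal 3 2 isT); right.
Qed.

(* The disjuncts are wopp, nwopp, wocp and nwocp, for e = (a^n, a^(n+1)) and
   f = (a^m, a^(m+1)). *)
Definition is_site (e f : vec * vec) : bool :=
  let c := vsub e.2 e.1 in
  knight_moveb c &&
  [|| [&& f.1 == vadd f.2 c, vsub f.1 e.2 == vsub f.2 e.1 & pm2eb (vsub f.1 e.2)],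
      [&& f.2 == vadd f.1 c, vsub f.1 e.1 == vsub f.2 e.2 & pm2eb (vsub f.1 e.1)],
      (f.2 == vadd f.1 (ctilde c)) && (vsub f.1 e.1 == part1 c) |
      (f.1 == vadd f.2 (ctilde c)) && (vsub f.2 e.1 == part1 c)].

Definition edge_ends (e f : vec * vec) : seq vec := [:: e.1; e.2; f.1; f.2].

Definition bisite (w : seq (vec * vec)) : bool :=
  if w is [:: e1; f1; e2; f2] then
    [&& is_site e1 f1, is_site e2 f2 &
        all (fun x => x \notin edge_ends e2 f2) (edge_ends e1 f1)]
  else false.

Lemma at_index s u : uniq s -> u \in s ->
  at_ s (index u s) = u /\ at_ s (index u s).+1 = next s u.
Proof.
move=> U uin; have ilt : (index u s < size s)%N by rewrite index_mem.
split; first by rewrite /at_ modn_small // nth_index.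
rewrite /at_ next_nth uin.
case: s U uin ilt => [//|y s'] U uin; set i := index u _ => ilt.
case: (ltnP i (size s')) => hi.
  by rewrite modn_small ?ltnS //=; apply: set_nth_default.
have -> : i = size s' by apply/eqP; rewrite eqn_leq hi -ltnS ilt.
by rewrite /= modnn /= nth_default.
Qed.

Lemma site_of_edges s e f : uniq s -> cycle_edge s e -> cycle_edge s f ->
  is_site e f -> site s (index e.1 s) (index f.1 s).
Proof.
case: e f => [u1 v1] [u2 v2] U /andP[/= i1 /eqP n1] /andP[/= i2 /eqP n2].
have [a1 b1] := at_index U i1; have [a2 b2] := at_index U i2.
case/andP => /= kc sb; split; first by rewrite index_mem.
split; first by rewrite index_mem.
exists (vsub v1 u1); rewrite a1 b1 a2 b2 n1 n2; split=> //.
case/or4P: sb.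
- by case/and3P => /eqP ? /eqP ? /pm2ebP ?; apply: Or41; split; rewrite ?vadd_vsub.
- by case/and3P => /eqP ? /eqP ? /pm2ebP ?; apply: Or42; split; rewrite ?vadd_vsub.
- by case/andP => /eqP ? /eqP ?; apply: Or43; split; rewrite ?vadd_vsub.
- by case/andP => /eqP ? /eqP ?; apply: Or44; split; rewrite ?vadd_vsub.
Qed.

Lemma bisite_bisited s w : uniq s -> all (cycle_edge s) w -> bisite w -> bisited s.
Proof.
case: w => [|e1 [|f1 [|e2 [|f2 []]]]] // U /allP C /and3P[S1 S2 /allP D].
have [c1 c2 c3 c4] : [/\ cycle_edge s e1, cycle_edge s f1, cycle_edge s e2 & cycle_edge s f2].
  by split; apply: C; rewrite !inE eqxx ?orbT.
exists (index e1.1 s), (index f1.1 s), (index e2.1 s), (index f2.1 s).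
split; [exact: site_of_edges | split; first exact: site_of_edges].
have ends e f : cycle_edge s e -> cycle_edge s f ->
    site_support s (index e.1 s) (index f.1 s) = edge_ends e f.
  case: e f => [u1 v1] [u2 v2] /andP[/= i1 /eqP n1] /andP[/= i2 /eqP n2].
  have [a1 b1] := at_index U i1; have [a2 b2] := at_index U i2.
  by rewrite /site_support a1 b1 a2 b2 n1 n2.
by rewrite !ends.
Qed.

(** * Gluing tours *)

Definition glueable_on (B : vec -> Prop) (A : seq (vec * vec)) (H : seq vec)
    (s : seq vec) : Prop :=
  [/\ knight_cycle B s, all (cycle_edge s) A &
      exists2 w, bisite w & all (fun e => cycle_edge s e && (e.1 \notin H)) w].

Lemma glueable_on_merge B B1 B2 A1 A2 A H1 H s1 s2 a b a' b' :
  glueable_on B1 A1 H1 s1 -> knight_cycle B2 s2 -> all (cycle_edge s2) A2 ->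
  (forall x, B x <-> B1 x \/ B2 x) -> (forall x, B1 x -> B2 x -> False) ->
  (a, b) \in A1 -> a \in H1 -> (b', a') \in A2 ->
  knight_move (vsub a' a) -> knight_move (vsub b b') ->
  (forall e, e \in A -> e \in A1 /\ e.1 != a \/ e \in A2 /\ e.1 != b') ->
  (forall x, B1 x -> x \in H -> x \in H1) ->
  exists s, glueable_on B A H s.
Proof.
move=> [C1 /allP E1 [w W /allP Ew]] C2 /allP E2 BB D ab aH b'a' ka kb EA HH1.
have [s Cs keep] := knight_cycle_merge C1 C2 D (E1 _ ab) (E2 _ b'a') ka kb.
exists s; split.
- by apply: knight_cycle_ext Cs => x; rewrite BB.
- apply/allP => e /EA [] [eA ne]; apply: keep.
    by rewrite E1 ?ne.
  by rewrite E2 ?ne ?orbT.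
exists w => //; apply/allP => e /Ew /andP[ce nH].
have ne : e.1 != a by apply/eqP => ea; move: nH; rewrite ea aH.
rewrite keep ?ce ?ne //=; apply: contra nH; apply: HH1.
by case: C1 => _ M1 _; apply/M1; case/andP: ce.
Qed.

Definition x_high (m : nat) : vec * vec := ((m%:Z, 1, 2), (m%:Z - 1, 3, 2)).
Definition x_low : vec * vec := ((1, 3, 1), (2, 1, 1)).
Definition y_high (n p : nat) : vec * vec := ((2, n%:Z, p%:Z - 2), (2, n%:Z - 1, p%:Z)).
Definition y_low (p : nat) : vec * vec := ((2, 1, p%:Z - 1), (2, 2, p%:Z - 3)).
Definition z_high (m p : nat) : vec * vec := ((m%:Z - 1, 1, p%:Z), (m%:Z - 1, 3, p%:Z - 1)).
Definition z_low (m : nat) : vec * vec := ((m%:Z, 3, 1), (m%:Z, 1, 2)).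

Definition gluing_edges (m n p : nat) : seq (vec * vec) :=
  [:: x_high m; x_low; y_high n p; y_low p; z_high m p; z_low m].

Definition high_tails (m n p : nat) : seq vec :=
  [:: (x_high m).1; (y_high n p).1; (z_high m p).1].

Definition glueable (m n p : nat) (s : seq vec) : Prop :=
  glueable_on (on_board m n p) (gluing_edges m n p) (high_tails m n p) s.

Lemma all_cycle_edge_shift s A t : uniq s -> all (cycle_edge s) A ->
  all (cycle_edge (map (vadd t) s)) (map (shift_edge t) A).
Proof.
by move=> U /allP E; apply/allP => _ /mapP[e eA ->]; apply: cycle_edge_shift (E e eA).
Qed.

Lemma on_board_addz m n p q x :
  on_board m n (p + q) x <-> on_board m n p x \/ on_board m n q (vsub x (0, 0, p%:Z)).
Proof.
case: x => [[a b] c]; rewrite /on_board /vsub /vx /vy /vz /=; split.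
  by move=> [? ? ?]; case: (boolP (c <= p%:Z)) => ?; [left|right]; split; lia.
by case=> -[? ? ?]; split; lia.
Qed.

Lemma on_board_addz_disj m n p q x :
  on_board m n p x -> on_board m n q (vsub x (0, 0, p%:Z)) -> False.
Proof. by case: x => [[a b] c]; rewrite /on_board /vsub /vx /vy /vz /= => -[? ? ?] [? ? ?]; lia. Qed.

Lemma glueable_addz m n p q s1 s2 : (2 <= m)%N -> (3 <= n)%N -> (4 <= p)%N -> (4 <= q)%N ->
  glueable m n p s1 -> glueable m n q s2 -> exists s, glueable m n (p + q) s.
Proof.
move=> hm hn hp hq G1 [C2 E2 _]; pose t : vec := (0, 0, p%:Z).
have U2 : uniq s2 by case: C2.
apply: (glueable_on_merge (a := (z_high m p).1) (b := (z_high m p).2)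
  (a' := vadd t (z_low m).2) (b' := vadd t (z_low m).1) G1
  (knight_cycle_shift t C2) (all_cycle_edge_shift t U2 E2)
  (@on_board_addz m n p q) (@on_board_addz_disj m n p q)).
- by rewrite !inE eqxx ?orbT.
- by rewrite !inE eqxx ?orbT.
- by apply: (map_f (shift_edge t)); rewrite !inE eqxx ?orbT.
- by rewrite (_ : vsub _ _ = (1, 0, 2)) //; apply/eqP; vec_lia.
- by rewrite (_ : vsub _ _ = (-1, 0, -2)) //; apply/eqP; vec_lia.
- move=> e; rewrite !inE => /or4P[|||/or3P[]] /eqP->.
  + by left; rewrite eqxx; split=> //; vec_lia.
  + by left; rewrite eqxx ?orbT; split=> //; vec_lia.
  + rewrite (_ : y_high _ _ = shift_edge t (y_high n q)); last by apply/eqP; vec_lia.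
    by right; rewrite eqxx ?orbT; split=> //; vec_lia.
  + rewrite (_ : y_low _ = shift_edge t (y_low q)); last by apply/eqP; vec_lia.
    by right; rewrite eqxx ?orbT; split=> //; vec_lia.
  + rewrite (_ : z_high _ _ = shift_edge t (z_high m q)); last by apply/eqP; vec_lia.
    by right; rewrite eqxx ?orbT; split=> //; vec_lia.
  + by left; rewrite eqxx ?orbT; split=> //; vec_lia.
- by move=> [[x y] z]; rewrite /on_board !inE /vx /vy /vz /= => -[? ? ?]; vec_lia.
Qed.

Lemma on_board_addy m n n' p x :
  on_board m (n + n') p x <-> on_board m n p x \/ on_board m n' p (vsub x (0, n%:Z, 0)).
Proof.
case: x => [[a b] c]; rewrite /on_board /vsub /vx /vy /vz /=; split.
  by move=> [? ? ?]; case: (boolP (b <= n%:Z)) => ?; [left|right]; split; lia.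
by case=> -[? ? ?]; split; lia.
Qed.

Lemma on_board_addy_disj m n n' p x :
  on_board m n p x -> on_board m n' p (vsub x (0, n%:Z, 0)) -> False.
Proof. by case: x => [[a b] c]; rewrite /on_board /vsub /vx /vy /vz /= => -[? ? ?] [? ? ?]; lia. Qed.

Lemma glueable_addy m n n' p s1 s2 : (2 <= m)%N -> (3 <= n)%N -> (3 <= n')%N -> (4 <= p)%N ->
  glueable m n p s1 -> glueable m n' p s2 -> exists s, glueable m (n + n') p s.
Proof.
move=> hm hn hn' hp G1 [C2 E2 _]; pose t : vec := (0, n%:Z, 0).
have U2 : uniq s2 by case: C2.
apply: (glueable_on_merge (a := (y_high n p).1) (b := (y_high n p).2)
  (a' := vadd t (y_low p).2) (b' := vadd t (y_low p).1) G1
  (knight_cycle_shift t C2) (all_cycle_edge_shift t U2 E2)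
  (@on_board_addy m n n' p) (@on_board_addy_disj m n n' p)).
- by rewrite !inE eqxx ?orbT.
- by rewrite !inE eqxx ?orbT.
- by apply: (map_f (shift_edge t)); rewrite !inE eqxx ?orbT.
- by rewrite (_ : vsub _ _ = (0, 2, -1)) //; apply/eqP; vec_lia.
- by rewrite (_ : vsub _ _ = (0, -2, 1)) //; apply/eqP; vec_lia.
- move=> e; rewrite !inE => /or4P[|||/or3P[]] /eqP->.
  + by left; rewrite eqxx; split=> //; vec_lia.
  + by left; rewrite eqxx ?orbT; split=> //; vec_lia.
  + rewrite (_ : y_high _ _ = shift_edge t (y_high n' p)); last by apply/eqP; vec_lia.
    by right; rewrite eqxx ?orbT; split=> //; vec_lia.
  + by left; rewrite eqxx ?orbT; split=> //; vec_lia.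
  + by left; rewrite eqxx ?orbT; split=> //; vec_lia.
  + by left; rewrite eqxx ?orbT; split=> //; vec_lia.
- by move=> [[x y] z]; rewrite /on_board !inE /vx /vy /vz /= => -[? ? ?]; vec_lia.
Qed.

Lemma on_board_addx m m' n p x :
  on_board (m + m') n p x <-> on_board m n p x \/ on_board m' n p (vsub x (m%:Z, 0, 0)).
Proof.
case: x => [[a b] c]; rewrite /on_board /vsub /vx /vy /vz /=; split.
  by move=> [? ? ?]; case: (boolP (a <= m%:Z)) => ?; [left|right]; split; lia.
by case=> -[? ? ?]; split; lia.
Qed.

Lemma on_board_addx_disj m m' n p x :
  on_board m n p x -> on_board m' n p (vsub x (m%:Z, 0, 0)) -> False.
Proof. by case: x => [[a b] c]; rewrite /on_board /vsub /vx /vy /vz /= => -[? ? ?] [? ? ?]; lia. Qed.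

Lemma glueable_addx m m' n p s1 s2 : (2 <= m)%N -> (2 <= m')%N -> (3 <= n)%N -> (4 <= p)%N ->
  glueable m n p s1 -> glueable m' n p s2 -> exists s, glueable (m + m') n p s.
Proof.
move=> hm hm' hn hp G1 [C2 E2 _]; pose t : vec := (m%:Z, 0, 0).
have U2 : uniq s2 by case: C2.
apply: (glueable_on_merge (a := (x_high m).1) (b := (x_high m).2)
  (a' := vadd t x_low.2) (b' := vadd t x_low.1) G1
  (knight_cycle_shift t C2) (all_cycle_edge_shift t U2 E2)
  (@on_board_addx m m' n p) (@on_board_addx_disj m m' n p)).
- by rewrite !inE eqxx ?orbT.
- by rewrite !inE eqxx ?orbT.
- by apply: (map_f (shift_edge t)); rewrite !inE eqxx ?orbT.
- by rewrite (_ : vsub _ _ = (2, 0, -1)) //; apply/eqP; vec_lia.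
- by rewrite (_ : vsub _ _ = (-2, 0, 1)) //; apply/eqP; vec_lia.
- move=> e; rewrite !inE => /or4P[|||/or3P[]] /eqP->.
  + rewrite (_ : x_high _ = shift_edge t (x_high m')); last by apply/eqP; vec_lia.
    by right; rewrite eqxx; split=> //; vec_lia.
  + by left; rewrite eqxx ?orbT; split=> //; vec_lia.
  + by left; rewrite eqxx ?orbT; split=> //; vec_lia.
  + by left; rewrite eqxx ?orbT; split=> //; vec_lia.
  + rewrite (_ : z_high _ _ = shift_edge t (z_high m' p)); last by apply/eqP; vec_lia.
    by right; rewrite eqxx ?orbT; split=> //; vec_lia.
  + rewrite (_ : z_low _ = shift_edge t (z_low m')); last by apply/eqP; vec_lia.
    by right; rewrite eqxx ?orbT; split=> //; vec_lia.
- by move=> [[x y] z]; rewrite /on_board !inE /vx /vy /vz /= => -[? ? ?]; vec_lia.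
Qed.

(** * Certified base tours *)

Definition coords (k : nat) : seq int := [seq Posz i | i <- iota 1 k].

Definition board_seq (m n p : nat) : seq vec :=
  [seq (xy, z) | xy <- [seq (x, y) | x <- coords m, y <- coords n], z <- coords p].

Lemma mem_coords k (x : int) : (x \in coords k) = (1 <= x <= k%:Z).
Proof.
apply/mapP/idP => [[i]|/andP[h1 h2]]; first by rewrite mem_iota => /andP[? ?] ->; lia.
by exists (absz x); [rewrite mem_iota|]; lia.
Qed.

Lemma mem_board_seq m n p x : x \in board_seq m n p <-> on_board m n p x.
Proof.
case: x => [[a b] c]; rewrite /on_board /vx /vy /vz /=; split.
  case/allpairsP => -[xy z] /= [/allpairsP [[x y] /= [hx hy ->]] hz [-> -> ->]].
  by move: hx hy hz; rewrite !mem_coords.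
move=> [ha hb hc]; apply/allpairsP; exists ((a, b), c) => /=.
by rewrite mem_coords; split=> //; apply/allpairsP; exists (a, b); rewrite /= !mem_coords.
Qed.

Lemma uniq_board_seq m n p : uniq (board_seq m n p).
Proof.
have U k : uniq (coords k) by rewrite map_inj_uniq ?iota_uniq // => ? ? [].
by apply: allpairs_uniq => //; [apply: allpairs_uniq => // -[? ?] [? ?] | move=> [? ?] [? ?]].
Qed.

Lemma size_board_seq m n p : size (board_seq m n p) = (m * n * p)%N.
Proof. by rewrite !size_allpairs !size_map !size_iota. Qed.

Definition glueable_check (m n p : nat) (s : seq vec) (w : seq (vec * vec)) : bool :=
  [&& uniq s, perm_eq s (board_seq m n p), cycle (fun x y => knight_moveb (vsub y x)) s,
      all (cycle_edge s) (gluing_edges m n p), bisite w &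
      all (fun e => cycle_edge s e && (e.1 \notin high_tails m n p)) w].

Lemma glueable_checkP m n p s w : glueable_check m n p s w -> glueable m n p s.
Proof.
case/and5P => U P C E /andP[W Ew]; split=> //; last by exists w.
split=> // [x|x xin]; first by rewrite (perm_mem P) mem_board_seq.
exact: (next_cycle C xin).
Qed.

(* A certified tour of the m x n x p board starts at (m, 1, 2) and is given by
   indices into [knight_table]; its bi-site is given by the positions k of the
   four edges (a^k, a^(k+1)). *)
Definition knight_table : seq vec :=
  [:: (-2, -1, 0); (-2, 0, -1); (-2, 0, 1); (-2, 1, 0); (-1, -2, 0); (-1, 0, -2);
      (-1, 0, 2); (-1, 2, 0); (0, -2, -1); (0, -2, 1); (0, -1, -2); (0, -1, 2);
      (0, 1, -2); (0, 1, 2); (0, 2, -1); (0, 2, 1); (1, -2, 0); (1, 0, -2);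
      (1, 0, 2); (1, 2, 0); (2, -1, 0); (2, 0, -1); (2, 0, 1); (2, 1, 0)].

Fixpoint knight_walk (x : vec) (ms : seq nat) : seq vec :=
  if ms is i :: ms' then x :: knight_walk (vadd x (nth vzero knight_table i)) ms'
  else [:: x].

Definition certificate : Type := (nat * nat * nat) * seq nat * seq nat.

Definition certificate_ok (c : certificate) : bool :=
  let: ((m, n, p), ks, ms) := c in
  let s := knight_walk (m%:Z, 1, 2) ms in
  glueable_check m n p s [seq (nth vzero s k, nth vzero s k.+1) | k <- ks].

Definition base_certificates : seq certificate := [::
  ((2, 3, 4), [:: 1; 19; 5; 14],
   [:: 7; 8; 13; 12; 16; 15; 11; 5; 11; 14; 8; 13; 17; 13; 8; 12; 13; 9; 7; 8; 12; 18;
       12]);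
  ((2, 3, 5), [:: 2; 8; 4; 28],
   [:: 7; 11; 10; 14; 16; 15; 11; 5; 11; 15; 16; 12; 6; 10; 12; 13; 18; 4; 14; 16; 12;
       13; 8; 12; 13; 11; 5; 10; 19]);
  ((2, 3, 6), [:: 1; 17; 3; 30],
   [:: 7; 8; 13; 18; 12; 10; 11; 6; 15; 16; 14; 8; 12; 13; 11; 5; 10; 14; 16; 15; 11;
       6; 10; 12; 13; 18; 4; 14; 16; 12; 5; 11; 13; 12; 17]);
  ((2, 3, 7), [:: 1; 7; 3; 11],
   [:: 7; 8; 13; 17; 11; 14; 4; 14; 16; 6; 12; 18; 6; 11; 14; 10; 18; 12; 10; 11; 14;
       11; 6; 10; 18; 7; 17; 11; 10; 15; 4; 14; 18; 8; 12; 6; 12; 10; 11; 14; 17]);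
  ((2, 4, 4), [:: 2; 11; 5; 22],
   [:: 7; 8; 18; 12; 7; 18; 9; 7; 8; 12; 16; 6; 19; 9; 7; 17; 4; 13; 19; 5; 16; 14; 6;
       8; 19; 11; 4; 14; 10; 18; 12]);
  ((2, 4, 5), [:: 2; 27; 14; 22],
   [:: 7; 8; 18; 6; 14; 17; 4; 18; 12; 13; 9; 7; 8; 12; 19; 8; 7; 18; 11; 5; 13; 8;
       19; 5; 9; 18; 12; 5; 16; 6; 12; 19; 6; 18; 8; 7; 9; 17; 12]);
  ((2, 4, 6), [:: 1; 39; 6; 41],
   [:: 7; 8; 18; 6; 15; 16; 14; 12; 5; 16; 15; 6; 18; 4; 14; 16; 5; 14; 16; 14; 4; 13;
       9; 19; 11; 7; 8; 19; 8; 5; 15; 10; 16; 15; 4; 13; 19; 11; 5; 8; 19; 9; 6; 14;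
       16; 12; 12]);
  ((2, 4, 7), [:: 2; 45; 4; 16],
   [:: 7; 8; 18; 12; 7; 9; 19; 6; 18; 9; 7; 8; 10; 19; 10; 14; 4; 15; 9; 12; 16; 15;
       4; 15; 13; 18; 4; 10; 18; 7; 8; 12; 14; 11; 17; 11; 14; 11; 5; 13; 16; 10; 15;
       10; 11; 5; 13; 19; 11; 4; 14; 16; 12; 14; 10]);
  ((2, 5, 4), [:: 1; 9; 3; 35],
   [:: 7; 14; 18; 10; 6; 9; 17; 11; 5; 14; 16; 6; 12; 18; 14; 6; 16; 5; 11; 14; 14;
       18; 4; 12; 13; 16; 8; 12; 7; 13; 16; 14; 11; 10; 14; 11; 4; 10; 19]);
  ((2, 5, 5), [:: 2; 17; 5; 41],
   [:: 7; 8; 18; 6; 14; 15; 16; 8; 12; 6; 10; 19; 14; 6; 18; 8; 9; 5; 12; 19; 13; 11;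
       4; 14; 16; 14; 6; 16; 14; 5; 13; 17; 9; 15; 5; 9; 12; 16; 15; 4; 11; 15; 10;
       12; 16; 13; 7; 12; 16]);
  ((2, 5, 6), [:: 1; 53; 3; 42],
   [:: 7; 14; 18; 6; 9; 19; 5; 17; 11; 6; 16; 14; 4; 10; 18; 12; 5; 15; 16; 14; 6; 9;
       11; 14; 15; 16; 14; 8; 12; 4; 11; 18; 12; 6; 14; 16; 10; 5; 13; 17; 7; 13; 17;
       11; 11; 4; 14; 16; 14; 15; 11; 5; 12; 8; 16; 15; 4; 15; 17]);
  ((2, 5, 7), [:: 2; 9; 4; 11],
   [:: 7; 8; 18; 12; 7; 13; 17; 4; 16; 6; 12; 19; 9; 7; 9; 19; 13; 11; 4; 10; 18; 12;
       12; 14; 6; 11; 16; 10; 5; 13; 11; 15; 12; 13; 16; 4; 14; 19; 10; 10; 7; 11; 13;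
       8; 16; 15; 15; 10; 6; 16; 5; 17; 14; 11; 13; 12; 9; 9; 12; 6; 12; 15; 17; 4; 9;
       12; 15; 12; 16]);
  ((2, 6, 4), [:: 1; 12; 5; 39],
   [:: 7; 8; 18; 12; 6; 15; 16; 5; 11; 14; 10; 11; 15; 16; 5; 13; 17; 13; 7; 12; 18;
       10; 9; 7; 10; 19; 11; 5; 13; 8; 14; 16; 15; 11; 10; 15; 9; 8; 7; 15; 10; 8; 16;
       15; 14; 11; 10]);
  ((2, 6, 5), [:: 1; 9; 3; 11],
   [:: 7; 8; 18; 6; 14; 16; 12; 6; 10; 14; 16; 6; 18; 14; 4; 12; 18; 12; 14; 6; 13;
       16; 4; 14; 19; 5; 11; 17; 9; 6; 10; 17; 7; 19; 9; 13; 5; 13; 17; 8; 7; 18; 11;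
       10; 11; 7; 10; 16; 5; 15; 18; 9; 7; 19; 5; 10; 18; 4; 17]);
  ((2, 6, 6), [:: 1; 61; 3; 33],
   [:: 7; 8; 18; 12; 7; 19; 6; 10; 18; 13; 9; 7; 17; 11; 4; 8; 12; 18; 7; 9; 10; 18;
       12; 5; 19; 7; 11; 17; 11; 11; 4; 14; 16; 12; 5; 15; 14; 18; 11; 8; 11; 5; 17;
       14; 15; 9; 12; 6; 13; 9; 19; 5; 11; 10; 9; 19; 5; 13; 16; 8; 5; 14; 16; 6; 19;
       15; 4; 17; 7; 9; 17]);
  ((2, 6, 7), [:: 2; 19; 4; 21],
   [:: 7; 8; 18; 12; 7; 19; 6; 10; 18; 13; 11; 4; 16; 5; 13; 17; 5; 12; 16; 6; 12; 19;
       7; 9; 19; 6; 10; 16; 4; 18; 12; 6; 11; 19; 7; 17; 13; 9; 7; 10; 8; 10; 15; 14;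
       16; 15; 10; 6; 16; 14; 11; 8; 11; 6; 14; 15; 12; 9; 16; 12; 15; 13; 8; 9; 5;
       14; 19; 11; 8; 12; 6; 15; 10; 9; 18; 8; 12; 15; 6; 8; 10; 14; 17]);
  ((3, 3, 4), [:: 3; 20; 10; 28],
   [:: 7; 11; 5; 13; 20; 5; 11; 14; 5; 16; 13; 17; 0; 13; 23; 5; 9; 6; 21; 15; 10; 11;
       3; 10; 15; 21; 6; 8; 12; 18; 10; 3; 11; 14; 21]);
  ((3, 3, 6), [:: 1; 12; 3; 7],
   [:: 7; 4; 14; 16; 18; 12; 0; 19; 16; 3; 22; 3; 16; 19; 0; 18; 13; 4; 23; 3; 16; 14;
       17; 11; 2; 20; 1; 12; 17; 11; 13; 12; 6; 22; 8; 1; 14; 22; 4; 7; 20; 5; 13; 11;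
       5; 20; 1; 18; 12; 6; 23; 10; 12]);
  ((3, 4, 4), [:: 2; 21; 7; 23],
   [:: 7; 13; 16; 0; 17; 18; 3; 17; 11; 14; 12; 6; 21; 11; 8; 1; 14; 16; 6; 15; 23; 4;
       7; 17; 11; 5; 20; 15; 4; 17; 2; 23; 3; 21; 11; 0; 10; 18; 12; 7; 18; 10; 6; 20;
       10; 3; 23]);
  ((3, 4, 5), [:: 2; 6; 4; 31],
   [:: 7; 13; 9; 19; 1; 16; 15; 4; 20; 1; 17; 14; 4; 18; 17; 2; 18; 12; 18; 12; 3; 21;
       4; 7; 18; 11; 4; 14; 10; 19; 18; 2; 10; 22; 12; 9; 13; 12; 8; 1; 19; 16; 6; 7;
       9; 22; 12; 9; 1; 19; 6; 10; 12; 16; 18; 6; 14; 5; 21]);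
  ((3, 4, 6), [:: 1; 63; 3; 51],
   [:: 7; 4; 21; 7; 4; 23; 7; 4; 15; 21; 0; 16; 6; 18; 12; 14; 8; 7; 22; 4; 15; 18; 2;
       17; 11; 16; 5; 6; 23; 7; 8; 10; 18; 3; 19; 9; 19; 1; 9; 23; 10; 3; 9; 15; 21;
       12; 2; 8; 21; 13; 8; 7; 6; 20; 12; 3; 22; 4; 5; 23; 4; 18; 7; 4; 18; 14; 5; 20;
       2; 12; 21]);
  ((3, 4, 7), [:: 4; 9; 7; 12],
   [:: 7; 4; 21; 7; 4; 18; 12; 19; 0; 16; 18; 12; 7; 4; 15; 20; 4; 15; 4; 14; 23; 1;
       9; 19; 16; 11; 14; 3; 16; 15; 6; 22; 4; 7; 17; 11; 16; 5; 6; 21; 5; 12; 13; 11;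
       19; 8; 13; 4; 14; 5; 9; 13; 19; 10; 9; 12; 19; 6; 4; 10; 15; 22; 10; 1; 19; 18;
       4; 18; 3; 8; 21; 14; 11; 1; 14; 11; 10; 15; 20; 12; 0; 20; 12]);
  ((3, 5, 4), [:: 1; 48; 3; 21],
   [:: 7; 14; 11; 9; 10; 18; 1; 12; 20; 6; 12; 7; 23; 6; 5; 20; 9; 0; 18; 14; 12; 9;
       6; 21; 15; 12; 6; 10; 11; 7; 21; 9; 8; 2; 14; 14; 11; 23; 1; 9; 10; 15; 21; 8;
       13; 1; 8; 19; 15; 11; 8; 19; 1; 9; 22; 12; 1; 16; 19]);
  ((3, 5, 6), [:: 1; 53; 3; 35],
   [:: 7; 14; 6; 18; 17; 1; 21; 0; 16; 19; 3; 22; 6; 11; 4; 20; 1; 17; 5; 23; 3; 16;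
       6; 18; 12; 14; 4; 11; 18; 14; 16; 2; 19; 19; 1; 17; 10; 4; 20; 2; 18; 7; 12;
       16; 19; 2; 18; 9; 7; 8; 22; 5; 10; 14; 13; 18; 8; 12; 9; 3; 18; 12; 14; 11; 13;
       16; 1; 15; 21; 1; 20; 9; 12; 15; 11; 1; 10; 22; 3; 11; 17; 5; 20; 11; 3; 21;
       13; 12; 10]);
  ((3, 6, 4), [:: 1; 12; 3; 22],
   [:: 7; 9; 12; 6; 10; 23; 11; 2; 23; 5; 11; 14; 8; 18; 1; 15; 10; 18; 17; 0; 21; 3;
       18; 12; 15; 13; 4; 20; 0; 21; 7; 12; 13; 9; 19; 1; 17; 9; 19; 1; 16; 19; 0; 18;
       9; 5; 22; 12; 13; 2; 8; 23; 1; 19; 11; 17; 3; 8; 13; 22; 10; 2; 15; 10; 21; 13;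
       9; 10; 1; 16; 19]);
  ((3, 6, 5), [:: 2; 45; 4; 24],
   [:: 7; 14; 4; 16; 6; 18; 14; 16; 2; 23; 10; 1; 18; 12; 6; 23; 9; 1; 17; 13; 17; 1;
       20; 6; 5; 23; 2; 23; 11; 2; 17; 12; 19; 3; 16; 19; 0; 9; 19; 13; 17; 0; 18; 9;
       5; 19; 18; 3; 16; 19; 0; 8; 21; 15; 9; 12; 7; 11; 4; 14; 12; 16; 6; 8; 17; 19;
       7; 4; 13; 16; 19; 0; 15; 9; 16; 19; 7; 17; 9; 8; 14; 6; 5; 19; 9; 7; 22; 10; 8]);
  ((3, 6, 6), [:: 2; 9; 4; 68],
   [:: 7; 14; 4; 16; 6; 18; 12; 17; 0; 19; 16; 3; 19; 7; 20; 2; 23; 8; 7; 18; 6; 10;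
       5; 23; 2; 20; 0; 19; 6; 18; 17; 1; 11; 23; 2; 20; 5; 6; 23; 5; 11; 4; 16; 14;
       19; 3; 17; 8; 8; 7; 9; 15; 18; 9; 19; 5; 6; 12; 17; 18; 10; 4; 15; 13; 17; 11;
       10; 4; 6; 22; 7; 4; 17; 5; 22; 13; 1; 20; 13; 12; 9; 3; 23; 1; 14; 16; 6; 22;
       10; 1; 21; 15; 2; 16; 10; 7; 18; 17; 13; 6; 8; 7; 9; 10; 14; 20; 12]);
  ((3, 6, 7), [:: 1; 103; 3; 58],
   [:: 7; 14; 4; 16; 6; 12; 20; 2; 18; 18; 2; 23; 1; 15; 19; 17; 11; 3; 21; 9; 4; 10;
       18; 1; 15; 16; 14; 7; 12; 18; 9; 19; 1; 16; 16; 2; 23; 14; 2; 16; 8; 12; 10;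
       18; 2; 17; 5; 23; 11; 2; 22; 3; 15; 16; 19; 8; 5; 12; 7; 23; 2; 18; 11; 16; 10;
       5; 14; 15; 11; 9; 7; 9; 10; 23; 10; 3; 19; 11; 9; 5; 13; 23; 14; 10; 9; 2; 10;
       15; 19; 6; 16; 10; 10; 15; 6; 12; 20; 13; 12; 1; 20; 9; 6; 14; 13; 11; 17; 1;
       10; 21; 13; 3; 17; 18; 9; 2; 10; 12; 13; 20; 11; 7; 10; 16; 12])].

Lemma base_certificates_ok : all certificate_ok base_certificates.
Proof. by vm_compute. Qed.

Lemma glueable_certified m n p : (m, n, p) \in [seq c.1.1 | c <- base_certificates] ->
  exists s, glueable m n p s.
Proof.
case/mapP => -[[[[m' n'] p'] ks] ms] /(allP base_certificates_ok) ok [-> -> ->].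
by eexists; apply: glueable_checkP ok.
Qed.

(** * Sufficiency *)

Definition all_odd (m n p : nat) : bool := [&& odd m, odd n & odd p].

Lemma glueable_base m n p : (m == 2)%N || (m == 3)%N -> (3 <= n <= 6)%N -> (4 <= p <= 7)%N ->
  ~~ all_odd m n p -> exists s, glueable m n p s.
Proof.
move=> hm hn hp hodd; apply: glueable_certified; move: hodd.
have : [|| n == 3, n == 4, n == 5 | n == 6]%N by lia.
have : [|| p == 4, p == 5, p == 6 | p == 7]%N by lia.
by case/orP: hm => /eqP-> /or4P[] /eqP-> /or4P[] /eqP->; vm_compute.
Qed.

Lemma ltn_step_ind (P : nat -> Prop) b k : (0 < k)%N ->
  (forall n, (b <= n < b + k)%N -> P n) -> (forall n, (b + k <= n)%N -> P (n - k)%N -> P n) ->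
  forall n, (b <= n)%N -> P n.
Proof.
move=> k0 base step; elim/ltn_ind => n IH bn.
by case: (ltnP n (b + k)) => h; [apply: base; lia | apply: step => //; apply: IH; lia].
Qed.

Lemma glueable_extend_z m n p : (m == 2)%N || (m == 3)%N -> (3 <= n <= 6)%N -> (4 <= p)%N ->
  ~~ all_odd m n p -> exists s, glueable m n p s.
Proof.
move=> hm hn; move: p; apply: (ltn_step_ind (k := 4)) => // [p hp|p hp IH] hodd.
  by apply: glueable_base => //; lia.
have [|s1 G1] := IH; first by move: hodd; rewrite /all_odd oddB; lia.
have [|s2 G2] := @glueable_base m n 4 hm hn isT; first by rewrite /all_odd /= !andbF.
have -> : p = (p - 4 + 4)%N by lia.
by apply: glueable_addz G1 G2; lia.
Qed.

Lemma glueable_extend_y m n p : (m == 2)%N || (m == 3)%N -> (3 <= n)%N -> (4 <= p)%N ->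
  ~~ all_odd m n p -> exists s, glueable m n p s.
Proof.
move=> hm; move: n; apply: (ltn_step_ind (k := 4)) => // [n hn|n hn IH] hp hodd.
  by apply: glueable_extend_z => //; lia.
have [|s1 G1] := IH hp; first by move: hodd; rewrite /all_odd oddB; lia.
have [|s2 G2] := @glueable_extend_z m 4 p hm isT hp; first by rewrite /all_odd /= andbF.
have -> : n = (n - 4 + 4)%N by lia.
by apply: glueable_addy G1 G2; lia.
Qed.

Lemma glueable_all m n p : (2 <= m)%N -> (3 <= n)%N -> (4 <= p)%N -> ~~ all_odd m n p ->
  exists s, glueable m n p s.
Proof.
move: m; apply: (ltn_step_ind (k := 2)) => // [m hm|m hm IH] hn hp hodd.
  by apply: glueable_extend_y => //; lia.
have [|s1 G1] := IH hn hp; first by move: hodd; rewrite /all_odd oddB; lia.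
have [|s2 G2] := @glueable_extend_y 2 n p isT hn hp; first by [].
have -> : m = (m - 2 + 2)%N by lia.
by apply: glueable_addx G1 G2; lia.
Qed.

Lemma knight_cycle_closed_tour m n p s :
  knight_cycle (on_board m n p) s -> closed_tour m n p s.
Proof.
case=> U M K; split=> // i ilt.
have [h1 h2] := at_index U (mem_nth vzero ilt).
by rewrite index_uniq // in h1 h2; rewrite h1 h2; apply/K/mem_nth.
Qed.

Lemma glueable_bisited_tour m n p s : glueable m n p s -> closed_tour m n p s /\ bisited s.
Proof.
case=> C _ [w W Ew]; split; first exact: knight_cycle_closed_tour.
apply: (bisite_bisited (w := w)) => //; first by case: C.
by apply/allP => e /(allP Ew) /andP[].
Qed.

(** * Necessity *)

Lemma at_mem s i : s != [::] -> at_ s i \in s.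
Proof. by case: s => // x s _; apply: mem_nth; rewrite ltn_pmod. Qed.

Lemma closed_tour_step m n p s i : closed_tour m n p s -> s != [::] ->
  [/\ knight_move (vsub (at_ s i.+1) (at_ s i)), on_board m n p (at_ s i)
    & on_board m n p (at_ s i.+1)].
Proof.
case=> U M K s0; split; try by apply/M/at_mem.
have sz : (0 < size s)%N by case: s s0 {U M K}.
have -> : at_ s i = at_ s (i %% size s) by rewrite /at_ modn_mod.
have -> : at_ s i.+1 = at_ s (i %% size s).+1.
  by rewrite /at_ -[(i %% size s).+1]addn1 modnDml addn1.
by apply: K; rewrite ltn_pmod.
Qed.

Lemma knight_move_odd c : knight_move c ->
  (odd (absz (vx c)) + odd (absz (vy c)) + odd (absz (vz c)) = 1)%N.
Proof. by move=> /permP /(_ odd) /=; lia. Qed.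

Lemma knight_move_two c : knight_move c ->
  [|| absz (vx c) == 2, absz (vy c) == 2 | absz (vz c) == 2]%N.
Proof. by move=> /perm_mem /(_ 2%N); rewrite !inE /= ![(2 == _)%N]eq_sym => ->. Qed.

Lemma closed_tour_mem m n p s x : closed_tour m n p s -> on_board m n p x -> x \in s.
Proof. by case=> _ M _ h; apply/M. Qed.

Lemma closed_tour_size m n p s : closed_tour m n p s -> size s = (m * n * p)%N.
Proof.
case=> U M _; rewrite -size_board_seq; apply/perm_size/uniq_perm => // [|x].
  exact: uniq_board_seq.
by apply/idP/idP => h; [apply/mem_board_seq/M | apply/M/mem_board_seq].
Qed.

Lemma closed_tour_not_all_odd m n p s : closed_tour m n p s -> ~~ all_odd m n p.
Proof.
move=> C; apply/negP => /and3P[om on op].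
have s0 : s != [::].
  apply/eqP => s0; suff : ((1, 1, 1) : vec) \in s by rewrite s0.
  apply: closed_tour_mem C _.
  by rewrite /on_board /vx /vy /vz /=; move: om on op; case: m; case: n; case: p.
pose ssum (v : vec) : int := vx v + vy v + vz v.
have step i : ((ssum (at_ s i.+1) - ssum (at_ s i)) %% 2 = 1)%Z.
  have [K _ _] := closed_tour_step i C s0; move: (knight_move_odd K); rewrite /ssum.
  by case: (at_ s i.+1) => [[? ?] ?]; case: (at_ s i) => [[? ?] ?]; rewrite /vsub /vx /vy /vz /=; lia.
have sum_i i : ((ssum (at_ s i) - ssum (at_ s 0) - i%:Z) %% 2 = 0)%Z.
  by elim: i => [|i IH]; [lia | move: (step i); lia].
have := sum_i (size s); have -> : at_ s (size s) = at_ s 0 by rewrite /at_ modnn mod0n.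
have : odd (size s) by rewrite (closed_tour_size C) !oddM om on op.
lia.
Qed.

Lemma no_closed_tour_2x2 p s : (2 <= p)%N -> ~ closed_tour 2 2 p s.
Proof.
move=> hp C.
have c1 : ((1, 1, 1) : vec) \in s.
  by apply: closed_tour_mem C _; rewrite /on_board /vx /vy /vz /=; split; lia.
have c2 : ((1, 1, 2) : vec) \in s.
  by apply: closed_tour_mem C _; rewrite /on_board /vx /vy /vz /=; split; lia.
have s0 : s != [::] by apply/eqP => s0; rewrite s0 in c1.
have step i : ((vz (at_ s i.+1) - vz (at_ s i)) %% 2 = 0)%Z.
  have [K B1 B2] := closed_tour_step i C s0; move: (knight_move_two K) B1 B2.
  case: (at_ s i.+1) => [[? ?] ?]; case: (at_ s i) => [[? ?] ?].
  by rewrite /on_board /vsub /vx /vy /vz /= => ? [? ? ?] [? ? ?]; lia.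
have vz_i i : ((vz (at_ s i) - vz (at_ s 0)) %% 2 = 0)%Z.
  by elim: i => [|i IH]; [lia | move: (step i); lia].
have [U _ _] := C.
have [a1 _] := at_index U c1; have [a2 _] := at_index U c2.
by move: (vz_i (index (1, 1, 1) s)) (vz_i (index (1, 1, 2) s)); rewrite a1 a2 /vz /=; lia.
Qed.

Lemma no_closed_tour_m33 m s : (2 <= m <= 3)%N -> ~ closed_tour m 3 3 s.
Proof.
move=> hm C; have c : ((2, 2, 2) : vec) \in s.
  by apply: closed_tour_mem C _; rewrite /on_board /vx /vy /vz /=; split; lia.
have [U _ _] := C; have [a1 _] := at_index U c.
have s0 : s != [::] by apply/eqP => s0; rewrite s0 in c.
have [K _ B] := closed_tour_step (index (2, 2, 2) s) C s0; move: (knight_move_two K) B.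
rewrite a1; case: (at_ s _) => [[? ?] ?].
by rewrite /on_board /vsub /vx /vy /vz /= => ? [? ? ?]; lia.
Qed.

Theorem theorem4p4 (m n p : nat) :
  (2 <= m)%N -> (m <= n)%N -> (n <= p)%N ->
  ((exists s : seq vec, closed_tour m n p s /\ bisited s) <->
   [/\ ~~ odd m || ~~ odd n || ~~ odd p, (3 <= n)%N & (4 <= p)%N]).
Proof.
move=> hm hmn hnp; split.
- move=> [s [C _]].
  have hn : (3 <= n)%N.
    rewrite leqNgt; apply/negP => hn; have [em en] : m = 2%N /\ n = 2%N by lia.
    by subst m n; apply: no_closed_tour_2x2 C.
  split=> //.
    by have := closed_tour_not_all_odd C; rewrite /all_odd !negb_and orbA.
  rewrite leqNgt; apply/negP => hp; have [en ep] : n = 3%N /\ p = 3%N by lia.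
  by subst n p; apply: no_closed_tour_m33 C; lia.
- move=> [hodd hn hp]; have [|s G] := glueable_all hm hn hp.
    by rewrite /all_odd -orbA -!negb_and in hodd.
  by exists s; apply: glueable_bisited_tour G.
Qed.
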